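(* Let $b=1/2$, let $\mathcal B$ be a Hamel basis of $\mathbb{R}$ over $\mathbb{Q}$ with $b\in\mathcal B$, and let $\pi:\mathbb{R}\to[0,1]$ be defined by $\pi(x)=\lambda^x_b-\lfloor\lambda^x_b\rfloor$ if $\lambda^x_b$ is not an odd integer, and $\pi(x)=1$ if $\lambda^x_b$ is an odd integer. Suppose $\pi_1,\pi_2:\mathbb{R}\to\mathbb{R}_+$ are minimal valid functions for $I_b$ with $\pi=\tfrac12\pi_1+\tfrac12\pi_2$. Then $\pi_i(x)=\pi_i(\lambda^x_b\, b)$ for every $x\in\mathbb{R}$ and $i=1,2$.
   Context: For $b\in\mathbb{R}\setminus\mathbb{Z}$, $I_b$ is the set of finite-support functions $y:\mathbb{R}\to\mathbb{Z}_+$ (i.e. $y(x)=0$ for all but finitely many $x$) such that $\sum_{x\in\mathbb{R}} y(x)\,x\equiv b \pmod 1$. A function $\pi:\mathbb{R}\to\mathbb{R}_+$ is a (nonnegative) valid function for $I_b$ if $\sum_{x\in\mathbb{R}}\pi(x)y(x)\ge 1$ for every $y\in I_b$. A valid function $\pi:\mathbb{R}\to\mathbb{R}_+$ is minimal if there is no valid function $\pi':\mathbb{R}\to\mathbb{R}_+$ with $\pi'\ne\pi$ and $\pi'\le\pi$ pointwise; equivalently (Gomory–Johnson), $\pi\ge0$ is subadditive ($\pi(x)+\pi(y)\ge\pi(x+y)$ for all $x,y$), symmetric ($\pi(x)+\pi(b-x)=1$ for all $x$) and $\pi(z)=0$ for all $z\in\mathbb{Z}$. A Hamel basis is a basis of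 $\mathbb{R}$ as a vector space over $\mathbb{Q}$; for $x\in\mathbb{R}$, $\lambda^x_b\in\mathbb{Q}$ denotes the coefficient of the basis element $b$ in the unique expression of $x$ as a finite rational linear combination of elements of $\mathcal B$. *)

From Stdlib Require Import Reals Lra QArith Qreals List ClassicalEpsilon.
Open Scope R_scope.

Definition lincomb (l : list (Q * R)) : R :=
  fold_right (fun p acc => Q2R (fst p) * snd p + acc) 0 l.

Definition hamel_basis (B : R -> Prop) : Prop :=
  (forall l : list (Q * R),
      NoDup (map snd l) -> Forall (fun p => B (snd p)) l ->
      lincomb l = 0 -> Forall (fun p => Q2R (fst p) = 0) l) /\
  (forall x : R, exists l : list (Q * R),
      NoDup (map snd l) /\ Forall (fun p => B (snd p)) l /\ x = lincomb l).

(* [hamel_coeff B b x q]: q is the coefficient of the basis element b in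
   the (unique) expansion of x in the basis B, i.e. q = lambda^x_b. *)
Definition hamel_coeff (B : R -> Prop) (b x : R) (q : Q) : Prop :=
  exists l : list (Q * R),
    NoDup (map snd l) /\ Forall (fun p => B (snd p)) l /\ x = lincomb l /\
    ((exists q', In (q', b) l /\ Q2R q' = Q2R q) \/
     (~ In b (map snd l) /\ Q2R q = 0)).

Definition sum_list (f : R -> R) (l : list R) : R :=
  fold_right (fun x acc => f x + acc) 0 l.

(* y : R -> Z_+ with finite support (witnessed by a duplicate-free list l
   containing the support), and sum_x y(x) x = b (mod 1).  Then
   sum_x pi(x) y(x) is computed over l. *)
Definition valid_fun (b : R) (pi : R -> R) : Prop :=
  (forall x, 0 <= pi x) /\
  forall (y : R -> nat) (l : list R),
    NoDup l -> (forall x, y x <> 0%nat -> In x l) ->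
    (exists k : Z, sum_list (fun x => INR (y x) * x) l = b + IZR k) ->
    sum_list (fun x => pi x * INR (y x)) l >= 1.

Definition minimal_valid (b : R) (pi : R -> R) : Prop :=
  valid_fun b pi /\
  ~ (exists pi' : R -> R, valid_fun b pi' /\ (forall x, pi' x <= pi x) /\
                          exists x, pi' x <> pi x).

Definition odd_integer (r : R) : Prop := exists k : Z, r = IZR (2 * k + 1).

(* floor via Int_part (Int_part r = up r - 1 = floor r). *)
Definition frac (r : R) : R := r - IZR (Int_part r).

Definition pi_lam (lam : R -> Q) (x : R) : R :=
  if excluded_middle_informative (odd_integer (Q2R (lam x))) then 1
  else frac (Q2R (lam x)).

(* Subtracting from x its b-component lam(x) b leaves a w with lam(w) = lam(-w) = 0,
   where pi vanishes; since pi1, pi2 are nonnegative and average to pi, they vanish at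
   w and -w too.  For a minimal valid function p with p(-z) = 0, lowering p at x to
   p(x + z) keeps it valid (split each occurrence of x into x + z and -z), so
   p(x) <= p(x + z).  Applied with z = w and z = -w this gives p(lam(x) b) = p(x). *)
From Stdlib Require Import Reals QArith Qreals List Lra Lia ClassicalEpsilon.
Open Scope R_scope.

Lemma sum_list_ext f g l : (forall t, f t = g t) -> sum_list f l = sum_list g l.
Proof. intro H; induction l; simpl; [reflexivity | rewrite H, IHl; reflexivity]. Qed.

Lemma sum_list_plus f g l :
  sum_list (fun t => f t + g t) l = sum_list f l + sum_list g l.
Proof. induction l; simpl; [lra | rewrite IHl; lra]. Qed.

Lemma sum_list_zero f l : (forall t, In t l -> f t = 0) -> sum_list f l = 0.
Proof.
  induction l; simpl; intros H; [reflexivity |].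
  rewrite H, IHl by auto. lra.
Qed.

Lemma sum_list_delta (h : R -> R) a l : NoDup l -> In a l ->
  sum_list (fun t => if Req_EM_T t a then h t else 0) l = h a.
Proof.
  induction l as [|c u IH]; simpl; intros Hn Hi; [contradiction |].
  apply NoDup_cons_iff in Hn as [Hc Hu].
  destruct (Req_EM_T c a) as [-> | Hca].
  - rewrite sum_list_zero; [lra |]. intros t Ht.
    destruct (Req_EM_T t a) as [-> |]; [contradiction | reflexivity].
  - destruct Hi as [Hi | Hi]; [congruence |]. rewrite IH; auto; lra.
Qed.

Lemma NoDup_remove_elem (a : R) l : NoDup l -> NoDup (remove Req_EM_T a l).
Proof.
  induction l as [|c u IH]; simpl; intros Hn; [constructor |].
  apply NoDup_cons_iff in Hn as [Hc Hu].
  destruct (Req_EM_T a c); auto. constructor; auto.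
  intro H; apply in_remove in H; tauto.
Qed.

Lemma sum_list_remove f (a : R) l : NoDup l -> In a l ->
  sum_list f l = f a + sum_list f (remove Req_EM_T a l).
Proof.
  induction l as [|c u IH]; simpl; intros Hn Hi; [contradiction |].
  apply NoDup_cons_iff in Hn as [Hc Hu].
  destruct (Req_EM_T a c) as [-> | Hac].
  - rewrite notin_remove by auto. reflexivity.
  - destruct Hi as [Hi | Hi]; [congruence |]. simpl. rewrite IH; auto; lra.
Qed.

Lemma sum_list_support f l1 : forall l2, NoDup l1 -> NoDup l2 ->
  (forall t, f t <> 0 -> (In t l1 <-> In t l2)) -> sum_list f l1 = sum_list f l2.
Proof.
  induction l1 as [|a u IH]; intros l2 H1 H2 H.
  - simpl. symmetry. apply sum_list_zero. intros t Ht.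
    destruct (Req_EM_T (f t) 0) as [| Hf]; auto. apply H in Hf. simpl in Hf. tauto.
  - apply NoDup_cons_iff in H1 as [Ha Hu]. simpl.
    destruct (Req_EM_T (f a) 0) as [Hfa | Hfa].
    + rewrite Hfa, (IH l2); auto; [lra |].
      intros t Hf. rewrite <- (H t Hf). simpl.
      split; [tauto |]. intros [E | E]; [subst; contradiction | auto].
    + assert (Hin : In a l2) by (apply (H a Hfa); simpl; auto).
      rewrite (sum_list_remove f a l2), (IH (remove Req_EM_T a l2));
        auto using NoDup_remove_elem.
      intros t Hf. split.
      * intro Ht. apply in_in_remove; [intros ->; contradiction |].
        apply (H t Hf); simpl; auto.
      * intro Ht. apply in_remove in Ht as [Ht Hne].
        apply (H t Hf) in Ht. simpl in Ht. destruct Ht; [congruence | auto].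
Qed.

(* Replaces the [y x] copies of [x] by [y x] copies of [x + z] and of [-z];
   the total [sum y(t) t] is unchanged since [x = (x + z) + (-z)]. *)
Definition move_mass (y : R -> nat) (x z : R) (t : R) : nat :=
  ((if Req_EM_T t x then 0 else y t) + (if Req_EM_T t (x + z) then y x else 0)
   + (if Req_EM_T t (- z) then y x else 0))%nat.

Lemma sum_list_move_mass g y x z L : NoDup L -> In x L -> In (x + z) L -> In (- z) L ->
  sum_list (fun t => g t * INR (move_mass y x z t)) L
  = sum_list (fun t => g t * INR (y t)) L + (g (x + z) + g (- z) - g x) * INR (y x).
Proof.
  intros HL Hx Hxz Hz.
  rewrite (sum_list_ext _ (fun t => g t * INR (y t)
      + ((if Req_EM_T t x then - (g t * INR (y t)) else 0)
      + ((if Req_EM_T t (x + z) then g t * INR (y x) else 0)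
      + (if Req_EM_T t (- z) then g t * INR (y x) else 0))))).
  - rewrite !sum_list_plus, !sum_list_delta by auto. ring.
  - intro t. unfold move_mass.
    destruct (Req_EM_T t x), (Req_EM_T t (x + z)), (Req_EM_T t (- z));
      rewrite ?plus_INR; simpl INR; ring.
Qed.

Section Lowering.

Variables (b : R) (p : R -> R) (x z : R).
Hypothesis p_opp_z : p (- z) = 0.

Lemma valid_fun_lower_at :
  valid_fun b p -> valid_fun b (fun t => if Req_EM_T t x then p (x + z) else p t).
Proof.
  intros [Hnn Hv]. split; [intro t; destruct (Req_EM_T t x); auto |].
  intros y l Hnd Hsup [k Hk].
  set (L := nodup Req_EM_T (x :: (x + z) :: (- z) :: l)).
  assert (HL : NoDup L) by apply NoDup_nodup.
  assert (HiL : forall t, In t L <-> In t (x :: (x + z) :: (- z) :: l))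
    by (intro; apply nodup_In).
  assert (Hx : In x L) by (apply HiL; simpl; auto).
  assert (Hxz : In (x + z) L) by (apply HiL; simpl; auto).
  assert (Hmz : In (- z) L) by (apply HiL; simpl; auto).
  assert (to_L : forall g, sum_list (fun t => g t * INR (y t)) l
                           = sum_list (fun t => g t * INR (y t)) L).
  { intro g. apply sum_list_support; auto. intros t Ht. split.
    - intro; apply HiL; simpl; auto.
    - intro; apply Hsup. intro E; apply Ht. rewrite E. simpl. ring. }
  assert (Hsup' : forall t, move_mass y x z t <> 0%nat -> In t L).
  { intros t Ht. apply HiL. unfold move_mass in Ht.
    destruct (Req_EM_T t x), (Req_EM_T t (x + z)), (Req_EM_T t (- z)); subst; simpl; auto;
      do 3 right; apply Hsup; intro E; apply Ht; rewrite E; reflexivity. }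
  assert (Hsum' : exists k : Z, sum_list (fun t => INR (move_mass y x z t) * t) L
                                = b + IZR k).
  { exists k.
    rewrite (sum_list_ext _ (fun t => t * INR (move_mass y x z t))) by (intro; ring).
    rewrite sum_list_move_mass, <- to_L by auto.
    rewrite (sum_list_ext _ (fun t => INR (y t) * t)) by (intro; ring).
    rewrite Hk. ring. }
  pose proof (Hv _ L HL Hsup' Hsum') as Hge.
  rewrite sum_list_move_mass, p_opp_z in Hge by auto.
  rewrite to_L, (sum_list_ext _ (fun t => p t * INR (y t)
      + (if Req_EM_T t x then (p (x + z) - p t) * INR (y t) else 0))).
  - rewrite sum_list_plus, sum_list_delta by auto. lra.
  - intro t. destruct (Req_EM_T t x); ring.
Qed.

Lemma minimal_valid_le_shift : minimal_valid b p -> p x <= p (x + z).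
Proof.
  intros [Hvalid Hmin].
  destruct (Rle_lt_dec (p x) (p (x + z))) as [| Hlt]; auto. exfalso. apply Hmin.
  exists (fun t => if Req_EM_T t x then p (x + z) else p t).
  split; [| split].
  - now apply valid_fun_lower_at.
  - intro t. destruct (Req_EM_T t x) as [-> |]; lra.
  - exists x. destruct (Req_EM_T x x); [lra | congruence].
Qed.

End Lowering.

Lemma minimal_valid_shift_invariant b p x z : minimal_valid b p ->
  p z = 0 -> p (- z) = 0 -> p (x + z) = p x.
Proof.
  intros Hp Hz Hmz.
  pose proof (minimal_valid_le_shift b p x z Hmz Hp).
  rewrite <- (Ropp_involutive z) in Hz.
  pose proof (minimal_valid_le_shift b p (x + z) (- z) Hz Hp).
  replace (x + z + - z) with x in * by ring. lra.
Qed.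

(* Sums the coefficients of all occurrences of [b], which may repeat. *)
Definition coefR (b : R) (l : list (Q * R)) : R :=
  fold_right (fun p acc => (if Req_EM_T (snd p) b then Q2R (fst p) else 0) + acc) 0 l.

Definition add_coef (q : Q) (v : R) (l : list (Q * R)) : list (Q * R) :=
  map (fun p => if Req_EM_T (snd p) v then (Qplus (fst p) q, snd p) else p) l.

Definition opp_lincomb (l : list (Q * R)) : list (Q * R) :=
  map (fun p => (Qopp (fst p), snd p)) l.

Lemma map_snd_add_coef q v l : map snd (add_coef q v l) = map snd l.
Proof.
  induction l as [|[a c] u IH]; simpl; auto.
  destruct (Req_EM_T c v); simpl; f_equal; auto.
Qed.

Lemma add_coef_notin q v l : ~ In v (map snd l) -> add_coef q v l = l.
Proof.
  induction l as [|[a c] u IH]; simpl; intros H; auto.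
  destruct (Req_EM_T c v); [subst; tauto |]. f_equal; auto.
Qed.

Lemma add_coef_in b q v l : NoDup (map snd l) -> In v (map snd l) ->
  lincomb (add_coef q v l) = lincomb l + Q2R q * v /\
  coefR b (add_coef q v l) = coefR b l + (if Req_EM_T v b then Q2R q else 0).
Proof.
  induction l as [|[a c] u IH]; simpl; intros Hn Hi; [contradiction |].
  apply NoDup_cons_iff in Hn as [Hc Hu].
  destruct (Req_EM_T c v) as [-> | Hcv].
  - rewrite add_coef_notin by auto. simpl. rewrite Q2R_plus.
    destruct (Req_EM_T v b); split; ring.
  - destruct Hi as [Hi | Hi]; [congruence |]. destruct (IH Hu Hi) as [E1 E2].
    unfold add_coef. simpl. fold (add_coef q v u). rewrite E1, E2. split; ring.
Qed.

Lemma lincomb_nodup_equiv b (B : R -> Prop) l : Forall (fun p => B (snd p)) l ->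
  exists l', NoDup (map snd l') /\ Forall (fun p => B (snd p)) l' /\
    lincomb l' = lincomb l /\ coefR b l' = coefR b l.
Proof.
  induction l as [|[q v] u IH]; intros HF.
  - exists nil. repeat split; constructor.
  - inversion HF as [|? ? Hv Hu]; subst. destruct (IH Hu) as (l' & N & F & E1 & E2).
    destruct (in_dec Req_EM_T v (map snd l')) as [Hi | Hi].
    + exists (add_coef q v l'). destruct (add_coef_in b q v l' N Hi) as [U1 U2].
      split; [rewrite map_snd_add_coef; auto |]. split.
      * apply Forall_map. eapply Forall_impl; [| exact F].
        intros [a c] H; simpl. destruct (Req_EM_T c v); auto.
      * simpl. rewrite U1, U2, E1, E2. split; ring.
    + exists ((q, v) :: l'). simpl. rewrite E1, E2. repeat split; constructor; auto.
Qed.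

Lemma lincomb_app l1 l2 : lincomb (l1 ++ l2) = lincomb l1 + lincomb l2.
Proof. induction l1; simpl; [ring |]. unfold lincomb in *. simpl. rewrite IHl1; ring. Qed.

Lemma coefR_app b l1 l2 : coefR b (l1 ++ l2) = coefR b l1 + coefR b l2.
Proof. induction l1; simpl; [ring |]. unfold coefR in *. simpl. rewrite IHl1; ring. Qed.

Lemma lincomb_opp l : lincomb (opp_lincomb l) = - lincomb l.
Proof.
  induction l; simpl; [ring |]. unfold lincomb in *; simpl in *.
  rewrite IHl, Q2R_opp; ring.
Qed.

Lemma coefR_opp b l : coefR b (opp_lincomb l) = - coefR b l.
Proof.
  induction l; simpl; [ring |]. unfold coefR in *; simpl in *.
  rewrite IHl, Q2R_opp. destruct (Req_EM_T (snd a) b); ring.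
Qed.

Lemma Forall_opp_lincomb (B : R -> Prop) l :
  Forall (fun p => B (snd p)) l -> Forall (fun p => B (snd p)) (opp_lincomb l).
Proof. intro H. apply Forall_map. eapply Forall_impl; [| exact H]. simpl; auto. Qed.

Lemma coefR_nodup b l q : NoDup (map snd l) ->
  ((exists q', In (q', b) l /\ Q2R q' = Q2R q) \/ (~ In b (map snd l) /\ Q2R q = 0)) ->
  coefR b l = Q2R q.
Proof.
  assert (coefR_notin : forall u, ~ In b (map snd u) -> coefR b u = 0).
  { induction u as [|[a c] u IH]; simpl; intros Hn; auto.
    destruct (Req_EM_T c b); [subst; tauto |]. rewrite IH; auto; ring. }
  intros N [[q' [Hi <-]] | [Hn ->]]; [| now apply coefR_notin].
  induction l as [|[a c] u IH]; simpl in *; [contradiction |].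
  apply NoDup_cons_iff in N as [Hc Hu].
  destruct Hi as [E | Hi].
  - inversion E; subst. destruct (Req_EM_T b b); [| congruence].
    rewrite coefR_notin by auto. ring.
  - destruct (Req_EM_T c b) as [-> |]; [exfalso; apply Hc, (in_map snd _ _ Hi) |].
    rewrite IH; auto; ring.
Qed.

Section HamelCoefficient.

Variables (B : R -> Prop) (b : R) (lam : R -> Q).
Hypothesis hB : hamel_basis B.
Hypothesis hlam : forall x, hamel_coeff B b x (lam x).

Lemma coefR_lincomb_zero l : Forall (fun p => B (snd p)) l ->
  lincomb l = 0 -> coefR b l = 0.
Proof.
  intros HF H0. destruct (lincomb_nodup_equiv b B l HF) as (l' & N & F & E & <-).
  rewrite <- E in H0. pose proof (proj1 hB l' N F H0) as Z. clear - Z.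
  induction Z as [|[a c] u Ha Hu IH]; simpl in *; auto.
  rewrite IH. destruct (Req_EM_T c b); lra.
Qed.

Lemma coefR_lincomb_unique l1 l2 :
  Forall (fun p => B (snd p)) l1 -> Forall (fun p => B (snd p)) l2 ->
  lincomb l1 = lincomb l2 -> coefR b l1 = coefR b l2.
Proof.
  intros F1 F2 E. assert (Z : coefR b (l1 ++ opp_lincomb l2) = 0).
  { apply coefR_lincomb_zero.
    - apply Forall_app; auto using Forall_opp_lincomb.
    - rewrite lincomb_app, lincomb_opp. lra. }
  rewrite coefR_app, coefR_opp in Z. lra.
Qed.

Lemma lam_lincomb l : Forall (fun p => B (snd p)) l -> Q2R (lam (lincomb l)) = coefR b l.
Proof.
  intros F. destruct (hlam (lincomb l)) as (l2 & N & F2 & E & C).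
  rewrite <- (coefR_nodup b l2 _ N C). now apply coefR_lincomb_unique.
Qed.

Hypothesis hb : B b.

Lemma lam_sub_component x :
  Q2R (lam (x - Q2R (lam x) * b)) = 0 /\ Q2R (lam (- (x - Q2R (lam x) * b))) = 0.
Proof.
  destruct (hlam x) as (lx & N & F & Ex & C).
  set (lw := lx ++ (Qopp (lam x), b) :: nil).
  assert (Fw : Forall (fun p => B (snd p)) lw) by (apply Forall_app; auto).
  assert (Ew : lincomb lw = x - Q2R (lam x) * b).
  { unfold lw. rewrite lincomb_app, <- Ex. simpl. rewrite Q2R_opp. ring. }
  assert (Cw : coefR b lw = 0).
  { unfold lw. rewrite coefR_app, (coefR_nodup b lx _ N C). simpl. rewrite Q2R_opp.
    destruct (Req_EM_T b b); [ring | congruence]. }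
  rewrite <- Ew, <- lincomb_opp, lam_lincomb, lam_lincomb, coefR_opp, Cw
    by auto using Forall_opp_lincomb.
  split; ring.
Qed.

End HamelCoefficient.

Lemma pi_lam_zero lam t : Q2R (lam t) = 0 -> pi_lam lam t = 0.
Proof.
  intro H. unfold pi_lam. rewrite H.
  destruct (excluded_middle_informative (odd_integer 0)) as [[k Hk] | _].
  - apply eq_IZR in Hk. lia.
  - unfold frac. rewrite <- (Int_part_spec 0 0) by lra. simpl. ring.
Qed.

Theorem mainTheorem2
  (B : R -> Prop) (hB : hamel_basis B) (hb : B (1/2))
  (lam : R -> Q) (hlam : forall x, hamel_coeff B (1/2) x (lam x))
  (pi1 pi2 : R -> R)
  (h1 : minimal_valid (1/2) pi1) (h2 : minimal_valid (1/2) pi2)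
  (hpi : forall x, pi_lam lam x = 1/2 * pi1 x + 1/2 * pi2 x) :
  forall x, pi1 x = pi1 (Q2R (lam x) * (1/2)) /\
            pi2 x = pi2 (Q2R (lam x) * (1/2)).
Proof.
  intro x. set (w := x - Q2R (lam x) * (1/2)).
  assert (vanish : forall t, Q2R (lam t) = 0 -> pi1 t = 0 /\ pi2 t = 0).
  { intros t Ht. pose proof (hpi t) as E. rewrite pi_lam_zero in E by exact Ht.
    pose proof (proj1 (proj1 h1) t). pose proof (proj1 (proj1 h2) t). lra. }
  destruct (lam_sub_component B (1/2) lam hB hlam hb x) as [Lw Lmw].
  destruct (vanish w Lw) as [p1w p2w], (vanish (- w) Lmw) as [p1mw p2mw].
  replace x with (Q2R (lam x) * (1/2) + w) at 1 3 by (unfold w; ring).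
  rewrite (minimal_valid_shift_invariant _ pi1 _ w h1 p1w p1mw),
          (minimal_valid_shift_invariant _ pi2 _ w h2 p2w p2mw).
  now split.
Qed.
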